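(* Let $R$ be a connected graph with vertices $v_1,\dots,v_r$, let $H$ be a rooted graph on $n$ vertices, let $\alpha\in[0,1]$, and let $\rho_1(\alpha),\dots,\rho_r(\alpha)$ be the eigenvalues (with multiplicity) of $A_\alpha(R)$. Then, as multisets, \[ \mathrm{Spec}\big(A_\alpha(R\{H\})\big)=\bigcup_{j=1}^{r}\mathrm{Spec}\big(A_\alpha(H)+\rho_j(\alpha)E\big). \]
   Context: For a graph $G$ and $\alpha\in[0,1]$, $A_\alpha(G)=\alpha D(G)+(1-\alpha)A(G)$, where $D(G)$ is the diagonal matrix of vertex degrees and $A(G)$ the adjacency matrix. For a connected graph $R$ on vertices $v_1,\dots,v_r$ and a rooted graph $H$, $R\{H\}$ is the graph obtained from $R$ and $r$ copies of $H$ by identifying the root of the $i$-th copy of $H$ with $v_i$, for each $i$. Vertices of $H$ are ordered so that the root is the last ($n$-th) vertex, and $E$ is the $n\times n$ matrix with $1$ in entry $(n,n)$ (the root's diagonal position) and zeros elsewhere. $\mathrm{Spec}(M)$ denotes the multiset of eigenvalues of $M$, and unions of spectra are multiset unions. *)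

From HB Require Import structures.
From mathcomp Require Import all_boot all_order all_algebra.
Set Implicit Arguments. Unset Strict Implicit. Unset Printing Implicit Defensive.
Import Order.TTheory GRing.Theory Num.Theory.
Local Open Scope ring_scope.

Definition simple_graph (T : finType) (e : rel T) : Prop :=
  symmetric e /\ irreflexive e.

Definition connected_graph (T : finType) (e : rel T) : Prop :=
  forall x y, connect e x y.

Definition deg (T : finType) (e : rel T) (x : T) : nat := #|[set y | e x y]|.

Definition Aalpha (C : numClosedFieldType) (T : finType) (e : rel T) (a : C)
  : 'M[C]_#|T| :=
  \matrix_(i, j)
    (a * (i == j)%:R * (deg e (enum_val i))%:R
     + (1 - a) * (e (enum_val i) (enum_val j))%:R).

(* Rooted graph H on vertex set 'I_n.+1, root = last vertex ord_max.
   The rooted product R{H}: vertices (i,u) = vertex u of the i-th copy of H,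
   where (i, root) is identified with v_i. *)
Definition rooted_product (r n : nat) (eR : rel 'I_r) (eH : rel 'I_n.+1)
  : rel ('I_r * 'I_n.+1) :=
  fun x y => ((x.1 == y.1) && eH x.2 y.2)
          || [&& x.2 == ord_max, y.2 == ord_max & eR x.1 y.1].

Definition Eroot (C : numClosedFieldType) (n : nat) : 'M[C]_#|'I_n.+1| :=
  delta_mx (enum_rank (ord_max : 'I_n.+1)) (enum_rank (ord_max : 'I_n.+1)).

Definition Spec (C : numClosedFieldType) (m : nat) (M : 'M[C]_m) : C -> nat :=
  fun l => mup l (char_poly M).

From HB Require Import structures.
From mathcomp Require Import all_boot all_order all_algebra all_fingroup zify ring.
Import Order.TTheory GRing.Theory Num.Theory.
Set Implicit Arguments. Unset Strict Implicit. Unset Printing Implicit Defensive.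
Local Open Scope ring_scope.

(* Order the vertices of R{H} copy by copy. Then A_alpha(R{H}) is the
   Kronecker-type sum I (x) A_alpha(H) + A_alpha(R) (x) E. Conjugating by
   P (x) I, where P triangularises A_alpha(R), gives a block-triangular matrix
   whose diagonal blocks are A_alpha(H) + rho_j E, so its characteristic
   polynomial is the product of the characteristic polynomials of these blocks;
   the multiplicity of an eigenvalue is then additive over j. *)

Lemma char_poly_conj (R : comNzRingType) k (S S' M : 'M[R]_k) :
  S *m S' = 1%:M -> char_poly (S *m M *m S') = char_poly M.
Proof.
move=> SS'; rewrite /char_poly /char_poly_mx !map_mxM.
have X_conj : ('X%:M : 'M[{poly R}]_k) = map_mx polyC S *m 'X%:M *m map_mx polyC S'.
  by rewrite mul_mx_scalar -scalemxAl -map_mxM SS' map_mx1 scalemx1.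
rewrite {1}X_conj -mulmxBl -mulmxBr !det_mulmx mulrAC -det_mulmx -map_mxM SS'.
by rewrite map_mx1 det1 mul1r.
Qed.

Lemma trigonalizable (C : numClosedFieldType) k (A : 'M[C]_k) :
  exists2 P, P \in unitmx & is_trig_mx (P *m A *m invmx P).
Proof.
case: k A => [|k] A.
  by exists 1%:M; [exact: unitmx1 | apply/is_trig_mxP => -[]].
have [P Pu Pt] := @Schur C k.+1 A isT.
exists P; first exact: unitarymx_unit.
by move: Pt; rewrite /similar_to conjumx //; exact: unitarymx_unit.
Qed.

Lemma det_trig_by (R : comNzRingType) k (A : 'M[R]_k) (w : 'I_k -> nat) :
  injective w -> (forall i j, (w i < w j)%N -> A i j = 0) ->
  \det A = \prod_i A i i.
Proof.
move=> w_inj A0.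
rewrite /determinant (bigD1 (1%g : {perm 'I_k})) //= [X in _ + X]big1 ?addr0.
  by rewrite odd_perm1 expr0 mul1r; apply: eq_bigr => i _; rewrite perm1.
move=> s s_neq1.
(* The permutation [s] cannot lower every rank, since it preserves their sum. *)
have [i lt_i] : exists i, (w i < w (s i))%N.
  apply/existsP; apply: contraR s_neq1 => /existsPn ge_s.
  have le_s i : (w (s i) <= w i ?= iff (w (s i) == w i))%N.
    by split; rewrite // leqNgt ge_s.
  have [_] := leqif_sum (P := xpredT) (fun i _ => le_s i).
  have sum_s : (\sum_i w (s i) = \sum_i w i)%N.
    by apply/esym; exact: (reindex_inj (@perm_inj _ s)).
  rewrite sum_s eqxx => /esym/forallP eq_s.
  by apply/eqP/permP => j; rewrite perm1; apply: w_inj; apply/eqP; exact: eq_s.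
by rewrite (bigD1 i) //= A0 // mul0r mulr0.
Qed.

Lemma char_poly_trig_by (R : comNzRingType) k (A : 'M[R]_k) (w : 'I_k -> nat) :
  injective w -> (forall i j, (w i < w j)%N -> A i j = 0) ->
  char_poly A = \prod_i ('X - (A i i)%:P).
Proof.
move=> w_inj A0; rewrite /char_poly (det_trig_by w_inj).
  by apply: eq_bigr => i _; rewrite !mxE eqxx.
move=> i j lt_ij; rewrite !mxE A0 // polyC0 subr0.
rewrite (_ : i == j = false) ?mulr0n //.
by apply: contraTF lt_ij => /eqP->; rewrite ltnn.
Qed.

Lemma ltn_mixed_radix (m i j u v : nat) : (u < m)%N -> (v < m)%N ->
  (i * m + u < j * m + v)%N = (i < j)%N || (i == j) && (u < v)%N.
Proof.
move=> um vm; case: (ltngtP i j) => [ij|ji|<-] /=; last by rewrite ltn_add2l.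
- have : (i.+1 * m <= j * m)%N by rewrite leq_mul2r ij orbT.
  nia.
- have : (j.+1 * m <= i * m)%N by rewrite leq_mul2r ji orbT.
  nia.
Qed.

Section BlockMatrix.

Variables (N m K : nat) (chi : 'I_K -> 'I_N * 'I_m).
Hypothesis chi_bij : bijective chi.

Lemma big_blocks (T : Type) (idx : T) (op : Monoid.com_law idx)
    (F : 'I_N * 'I_m -> T) :
  \big[op/idx]_k F (chi k) = \big[op/idx]_i \big[op/idx]_u F (i, u).
Proof.
transitivity (\big[op/idx]_x F x).
  by apply/esym; apply: reindex; exact: onW_bij.
by rewrite pair_big; apply: eq_bigr => -[].
Qed.

Section Ring.

Variable R : comNzRingType.

(* Through [chi], 'I_K is read as 'I_N * 'I_m: [mx_of_blocks Y] is the
   N x N block matrix with m x m blocks [Y i j], and [kronmx P A] is P (x) A. *)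
Definition mx_of_blocks (Y : 'I_N -> 'I_N -> 'M[R]_m) : 'M[R]_K :=
  \matrix_(k, l) Y (chi k).1 (chi l).1 (chi k).2 (chi l).2.

Definition kronmx (P : 'M[R]_N) (A : 'M[R]_m) : 'M[R]_K :=
  mx_of_blocks (fun i j => P i j *: A).

Lemma eq_mx_of_blocks Y Z :
  (forall i j, Y i j = Z i j) -> mx_of_blocks Y = mx_of_blocks Z.
Proof. by move=> eYZ; apply/matrixP => k l; rewrite !mxE eYZ. Qed.

Lemma mx_of_blocksD Y Z :
  mx_of_blocks Y + mx_of_blocks Z = mx_of_blocks (fun i j => Y i j + Z i j).
Proof. by apply/matrixP => k l; rewrite !mxE. Qed.

Lemma mx_of_blocksM Y Z :
  mx_of_blocks Y *m mx_of_blocks Z =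
  mx_of_blocks (fun i j => \sum_h Y i h *m Z h j).
Proof.
apply/matrixP => k l; rewrite !mxE summxE.
under eq_bigr do rewrite !mxE.
rewrite (@big_blocks _ 0 +%R (fun x => Y _ x.1 _ x.2 * Z x.1 _ x.2 _)).
by apply: eq_bigr => h _; rewrite mxE.
Qed.

Lemma mx_of_blocks1 : mx_of_blocks (fun i j => (i == j)%:R *: 1%:M) = 1%:M.
Proof.
apply/matrixP => k l; rewrite !mxE -(inj_eq (bij_inj chi_bij)).
by case: (chi k) (chi l) => [i u] [j v]; rewrite xpair_eqE -mulnb natrM.
Qed.

Lemma kronmxM P Q A B : kronmx P A *m kronmx Q B = kronmx (P *m Q) (A *m B).
Proof.
rewrite mx_of_blocksM; apply/matrixP => k l; rewrite !mxE summxE mulr_suml.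
by apply: eq_bigr => h _; rewrite -scalemxAl -scalemxAr scalerA !mxE.
Qed.

Lemma kronmx11 : kronmx 1%:M 1%:M = 1%:M.
Proof. by rewrite -mx_of_blocks1; apply/matrixP => k l; rewrite !mxE. Qed.

Lemma mx_of_blocks_diag_conj (Q Q' : 'I_N -> 'M[R]_m) Y :
  mx_of_blocks (fun i j => (i == j)%:R *: Q i) *m mx_of_blocks Y
    *m mx_of_blocks (fun i j => (i == j)%:R *: Q' j) =
  mx_of_blocks (fun i j => Q i *m Y i j *m Q' j).
Proof.
rewrite !mx_of_blocksM; apply: eq_mx_of_blocks => i j.
rewrite (bigD1 j) //= eqxx scale1r [X in _ + X]big1 ?addr0; last first.
  by move=> h /negbTE->; rewrite scale0r mulmx0.
rewrite (bigD1 i) //= eqxx scale1r [X in _ + X]big1 ?addr0 // => h.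
by rewrite eq_sym => /negbTE->; rewrite scale0r mul0mx.
Qed.

End Ring.

Section Field.

Variable C : numClosedFieldType.

Lemma char_poly_mx_of_trig_blocks (Y : 'I_N -> 'I_N -> 'M[C]_m) :
  (forall i j : 'I_N, (i < j)%N -> Y i j = 0) -> (forall i, is_trig_mx (Y i i)) ->
  char_poly (mx_of_blocks Y) = \prod_i \prod_u ('X - (Y i i u u)%:P).
Proof.
move=> Y0 Ytrig.
rewrite (char_poly_trig_by (w := fun k => (chi k).1 * m + (chi k).2)%N).
- rewrite -(@big_blocks _ 1 *%R (fun x => 'X - (Y x.1 x.1 x.2 x.2)%:P)).
  by apply: eq_bigr => k _; rewrite mxE.
- move=> k l eq_w; apply: (bij_inj chi_bij); move: eq_w.
  case: (chi k) (chi l) => [i u] [j v] /= eq_w.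
  have lt_u := ltn_ord u; have lt_v := ltn_ord v.
  have := ltn_mixed_radix i j lt_u lt_v; have := ltn_mixed_radix j i lt_v lt_u.
  rewrite eq_w ltnn; case: ltngtP => // /val_inj <- /=.
  by case: ltngtP => // /val_inj <-.
- move=> k l; rewrite mxE; case: (chi k) (chi l) => [i u] [j v] /=.
  rewrite ltn_mixed_radix // => /orP[lt_ij | /andP[/eqP/val_inj <- lt_uv]].
    by rewrite Y0 // mxE.
  exact: (is_trig_mxP (Ytrig i)).
Qed.

Lemma char_poly_mx_of_blocks_trig (Y : 'I_N -> 'I_N -> 'M[C]_m) :
  (forall i j : 'I_N, (i < j)%N -> Y i j = 0) ->
  char_poly (mx_of_blocks Y) = \prod_i char_poly (Y i i).
Proof.
move=> Y0; have [Q Qu Qtrig] := fin_all_exists2 (fun i => trigonalizable (Y i i)).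
pose D := mx_of_blocks (fun i j => (i == j)%:R *: Q i).
pose D' := mx_of_blocks (fun i j => (i == j)%:R *: invmx (Q j)).
have DD' : D *m D' = 1%:M.
  rewrite -[D *m D'](congr1 (mulmx^~ D') (mulmx1 D)) -mx_of_blocks1.
  rewrite mx_of_blocks_diag_conj; apply: eq_mx_of_blocks => i j.
  have [<-|_] := eqVneq i j; last by rewrite !scale0r mulmx0 mul0mx.
  by rewrite !scale1r mulmx1 mulmxV.
rewrite -(char_poly_conj _ DD') mx_of_blocks_diag_conj char_poly_mx_of_trig_blocks //.
- apply: eq_bigr => i _; rewrite -(char_poly_conj (Y i i) (mulmxV (Qu i))).
  by rewrite (char_poly_trig (Qtrig i)).
- by move=> i j lt_ij; rewrite Y0 // mulmx0 mul0mx.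
Qed.

Lemma char_poly_kron_pencil (B : 'M[C]_N) (A E : 'M[C]_m) :
  exists2 s : seq C, char_poly B = \prod_(x <- s) ('X - x%:P) &
    char_poly (kronmx 1%:M A + kronmx B E) =
    \prod_(x <- s) char_poly (A + x *: E).
Proof.
have [P Pu Ttrig] := trigonalizable B; set T := P *m B *m invmx P in Ttrig.
exists [seq T i i | i <- enum 'I_N]; rewrite big_map big_enum /=.
  by rewrite -(char_poly_trig Ttrig) char_poly_conj // mulmxV.
have PP' : kronmx P 1%:M *m kronmx (invmx P) 1%:M = 1%:M.
  by rewrite kronmxM mulmxV // mulmx1 kronmx11.
rewrite -(char_poly_conj _ PP') mulmxDr mulmxDl !kronmxM.
rewrite [P *m 1%:M]mulmx1 mulmxV // !mul1mx !mulmx1 -/T.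
rewrite mx_of_blocksD char_poly_mx_of_blocks_trig.
  by apply: eq_bigr => i _; rewrite mxE eqxx scale1r.
move=> i j lt_ij; rewrite mxE (is_trig_mxP Ttrig) // scale0r addr0.
rewrite (_ : i == j = false) ?scale0r //.
by apply: contraTF lt_ij => /eqP->; rewrite ltnn.
Qed.

End Field.
End BlockMatrix.

Lemma mup_prod (F : fieldType) (I : Type) x (s : seq I) (G : I -> {poly F}) :
  (forall i, G i != 0) -> mup x (\prod_(i <- s) G i) = (\sum_(i <- s) mup x (G i))%N.
Proof.
move=> G_neq0.
suff [] : \prod_(i <- s) G i != 0 /\
          mup x (\prod_(i <- s) G i) = (\sum_(i <- s) mup x (G i))%N by [].
apply: (big_ind2 (fun p k => p != 0 /\ mup x p = k)) => //.
- by split; [exact: oner_neq0 | apply: mupNroot; rewrite root1].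
- move=> p1 k1 p2 k2 [p1_neq0 <-] [p2_neq0 <-].
  by split; [exact: mulf_neq0 | exact: mupM].
Qed.

Lemma perm_eq_roots (F : fieldType) (s t : seq F) :
  (forall x, mup x (\prod_(y <- s) ('X - y%:P)) = count_mem x t) -> perm_eq s t.
Proof. by move=> mu_s; apply/allP => x _ /=; rewrite -mu_prod_XsubC mu_s. Qed.

Lemma deg_rooted_product r n (eR : rel 'I_r) (eH : rel 'I_n.+1) i u :
  irreflexive eR ->
  deg (rooted_product eR eH) (i, u) = (deg eH u + (u == ord_max) * deg eR i)%N.
Proof.
move=> eR_irr.
pose in_copy := setX [set i] [set v | eH u v].
pose to_root := setX [set j | (u == ord_max) && eR i j] [set ord_max : 'I_n.+1].
have nbhd : [set y | rooted_product eR eH (i, u) y] = in_copy :|: to_root.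
  by apply/setP => -[j v]; rewrite !inE /rooted_product /= eq_sym andbA andbAC.
have no_loop : in_copy :&: to_root = set0.
  apply/setP => -[j v]; rewrite !inE.
  by case: (eqVneq j i) => [->|]; rewrite ?eR_irr ?andbF.
rewrite /deg nbhd cardsU no_loop cards0 subn0 !cardsX !cards1 mul1n muln1.
congr (_ + _)%N; case: (u == ord_max); rewrite ?mul0n ?mul1n.
  by apply: eq_card => j; rewrite !inE.
by apply: eq_card0 => j; rewrite !inE.
Qed.

Definition pair_rank (T1 T2 : finType) (k : 'I_#|{: T1 * T2}|) : 'I_#|T1| * 'I_#|T2| :=
  (enum_rank (enum_val k).1, enum_rank (enum_val k).2).

Lemma pair_rank_bij (T1 T2 : finType) : bijective (@pair_rank T1 T2).
Proof.
exists (fun x => enum_rank (enum_val x.1, enum_val x.2)).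
  by move=> k; rewrite /pair_rank /= !enum_rankK -surjective_pairing enum_valK.
by move=> [x1 x2]; rewrite /pair_rank enum_rankK /= !enum_valK.
Qed.

Lemma Aalpha_rooted_product (C : numClosedFieldType) r n
    (eR : rel 'I_r) (eH : rel 'I_n.+1) (a : C) :
  irreflexive eR ->
  Aalpha (rooted_product eR eH) a =
  kronmx (@pair_rank _ _) 1%:M (Aalpha eH a) +
  kronmx (@pair_rank _ _) (Aalpha eR a) (Eroot C n).
Proof.
move=> eR_irr; apply/matrixP => k l.
rewrite /Aalpha /Eroot /pair_rank !mxE /= !enum_rankK !(inj_eq enum_rank_inj).
rewrite -[k == l](inj_eq enum_val_inj).
case: (enum_val k) => i u; case: (enum_val l) => j v /=.
rewrite deg_rooted_product // xpair_eqE /rooted_product /=.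
have [<-|ne_ij] := eqVneq i j; last first.
  rewrite /= !(mul0r, mulr0, add0r).
  by case: (u == ord_max); case: (v == ord_max); case: (eR i j);
    rewrite /= ?(mulr0, mulr1).
rewrite eR_irr /= !(andbT, andbF, orbF, mulr0, mul1r, addr0).
have [<-|ne_uv] := eqVneq u v; first by rewrite andbb natrD natrM /= mulr1n; ring.
have -> : (u == ord_max) && (v == ord_max) = false.
  by apply: contraNF ne_uv => /andP[/eqP-> /eqP->].
by rewrite !(mulr0, mul0r, addr0).
Qed.

Theorem theorem1 (C : numClosedFieldType) (r n : nat)
  (eR : rel 'I_r) (eH : rel 'I_n.+1) (a : C) (rho : 'I_r -> C) :
  simple_graph eR -> connected_graph eR -> simple_graph eH ->
  0 <= a <= 1 ->
  (forall l : C, Spec (Aalpha eR a) l = #|[pred j | rho j == l]|) ->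
  forall l : C,
    Spec (Aalpha (rooted_product eR eH) a) l
    = (\sum_(j < r) Spec (Aalpha eH a + rho j *: Eroot C n) l)%N.
Proof.
move=> [_ eR_irr] _ _ _ spec_rho l.
have [s char_R char_RH] :=
  char_poly_kron_pencil (@pair_rank_bij _ _) (Aalpha eR a) (Aalpha eH a) (Eroot C n).
have s_rho : perm_eq s [seq rho j | j <- index_enum 'I_r].
  apply: perm_eq_roots => x; rewrite -char_R.
  by rewrite [LHS]spec_rho count_map -sum1_card -sum1_count; apply: eq_bigr.
rewrite /Spec (Aalpha_rooted_product _ _ eR_irr) char_RH mup_prod; last first.
  by move=> x; exact: monic_neq0 (char_poly_monic _).
by rewrite (perm_big _ s_rho) big_map.
Qed.
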